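(* For every integer $k\ge 2$, the cube polynomials of the $k$-Pell graphs satisfy $$C_{\Pi_{n,k}}(x)=\bigl(k+(k-1)x\bigr)\,C_{\Pi_{n-1,k}}(x)+(1+x)\,C_{\Pi_{n-2,k}}(x),\qquad n\ge 2,$$ with $C_{\Pi_{0,k}}(x)=1$ and $C_{\Pi_{1,k}}(x)=k+(k-1)x$.
   Context: For an integer $k\ge 2$, a $k$-Pell string is a finite word over the alphabet $\{0,1,\ldots,k-1,kk\}$, i.e. a word over $\{0,1,\ldots,k\}$ in which every maximal run of the letter $k$ has even length. For $n\ge 0$, the $k$-Pell graph $\Pi_{n,k}$ has as vertices all $k$-Pell strings of length $n$, and two vertices are adjacent if one is obtained from the other either by replacing a single letter $i$ by $i+1$ (or vice versa) for some $i\in\{0,1,\ldots,k-2\}$, or by replacing one factor $(k-1)(k-1)$ by $kk$ (or vice versa), in such a way that the resulting string is again a $k$-Pell string. The cube polynomial of a graph $G$ is $C_G(x)=\sum_{i\ge 0}c_i(G)x^i$, where $c_i(G)$ is the number of induced subgraphs of $G$ isomorphic to the hypercube $Q_i$. *)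

From HB Require Import structures.
From mathcomp Require Import all_boot all_order all_algebra.
Set Implicit Arguments. Unset Strict Implicit. Unset Printing Implicit Defensive.
Import Order.TTheory GRing.Theory Num.Theory.

Definition qadj (i : nat) (u v : {ffun 'I_i -> bool}) : bool :=
  #|[set j | u j != v j]| == 1.

Definition induces_cube (V : finType) (e : rel V) (i : nat) (S : {set V}) : bool :=
  [exists f : {ffun {ffun 'I_i -> bool} -> V},
     [&& injectiveb f, f @: setT == S &
         [forall u, forall v, e (f u) (f v) == qadj u v]]].

Definition cube_count (V : finType) (e : rel V) (i : nat) : nat :=
  #|[set S : {set V} | induces_cube e i S]|.

(* C_G(x) = sum_i c_i(G) x^i ; c_i(G) = 0 as soon as i > #|V| (2^i > #|V|),
   so the sum over i <= #|V| is the full sum. *)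
Definition cube_poly (V : finType) (e : rel V) : {poly int} :=
  (\poly_(i < #|V|.+1) (cube_count e i)%:R)%R.

(* A word over {0,...,k} is a k-Pell string iff every maximal run of the
   letter k has even length, i.e. it parses (greedily from the left) as a
   word over {0,...,k-1, kk}. *)
Fixpoint pellb (k : nat) (s : seq nat) : bool :=
  match s with
  | [::] => true
  | a :: t =>
      if a == k then
        match t with
        | [::] => false
        | b :: t' => (b == k) && pellb k t'
        end
      else pellb k t
  end.

Definition pell_vertex (n k : nat) :=
  {t : n.-tuple 'I_k.+1 | pellb k (map val t)}.

Definition letter n k (t : n.-tuple 'I_k.+1) (i : 'I_n) : nat := val (tnth t i).

Definition step1 n k (u v : n.-tuple 'I_k.+1) : bool :=
  [exists i : 'I_n,
     [&& [forall j : 'I_n, (j != i) ==> (letter u j == letter v j)],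
         (letter u i).+1 == letter v i & letter v i <= k - 1]].

Definition step2 n k (u v : n.-tuple 'I_k.+1) : bool :=
  [exists i : 'I_n, exists i' : 'I_n,
     [&& val i' == (val i).+1,
         letter u i == k - 1, letter u i' == k - 1,
         letter v i == k, letter v i' == k &
         [forall j : 'I_n, ((j != i) && (j != i')) ==> (letter u j == letter v j)]]].

Definition pell_adj (n k : nat) : rel (pell_vertex n k) :=
  fun x y => let u := val x in let v := val y in
    [|| step1 u v, step1 v u, step2 u v | step2 v u].

Definition pell_cube_poly (n k : nat) : {poly int} := cube_poly (@pell_adj n k).

From HB Require Import structures.
From mathcomp Require Import all_boot all_order all_algebra.
From mathcomp Require Import zify ring.
Set Implicit Arguments. Unset Strict Implicit. Unset Printing Implicit Defensive.

(* Sort the vertices of Pi_{n,k} by their first letter.  Adjacent words with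
   different first letters differ by one in that letter, and a word has at most
   one neighbour with any given other first letter.  Hence the first letter of
   an induced cube Q_i is either constant or takes two consecutive values a and
   a+1, and in the latter case the cube is a prism: two copies of Q_(i-1), one on
   each level, matched by edges.  Prepending a letter a < k, resp. kk, identifies
   the cubes on level a, resp. k, with the cubes of Pi_(n-1), resp. Pi_(n-2).  The
   prisms between levels a and a+1 < k are the prisms over the cubes of Pi_(n-1),
   and those between k-1 and k are the unions of (k-1)(k-1)T and kkT for the
   cubes T of Pi_(n-2), because a word starting with k-1 and adjacent to kkw is (k-1)(k-1)w.
   Counting the classes gives
     c_i(n) = k c_i(n-1) + (k-1) c_(i-1)(n-1) + c_i(n-2) + c_(i-1)(n-2),
   the coefficientwise form of the recurrence. *)

(** * Hypercubes *)

Notation qvertex i := {ffun 'I_i -> bool}.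

Section Hypercube.
Variable i : nat.
Implicit Types (u v : qvertex i) (d : 'I_i).

Definition qflip d u : qvertex i := [ffun j => if j == d then ~~ u j else u j].
Definition qdiff u v := [set j | u j != v j].

Lemma qadjE u v : qadj u v = (#|qdiff u v| == 1).
Proof. by []. Qed.

Lemma qdiffC u v : qdiff u v = qdiff v u.
Proof. by apply/setP => j; rewrite !inE eq_sym. Qed.

Lemma qdiff_eq0 u v : (qdiff u v == set0) = (u == v).
Proof.
apply/eqP/eqP => [uv0|->]; last by apply/setP => j; rewrite !inE eqxx.
apply/ffunP => j; apply/eqP/negPn/negP => uvj.
by have := in_set0 j; rewrite -uv0 inE uvj.
Qed.

Lemma qadj_sym u v : qadj u v = qadj v u.
Proof. by rewrite !qadjE qdiffC. Qed.

Lemma qadj_irr : irreflexive (@qadj i).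
Proof.
move=> u; have /eqP uu0 : qdiff u u == set0 by rewrite qdiff_eq0.
by rewrite qadjE uu0 cards0.
Qed.

Lemma qadj_flip d u : qadj u (qflip d u).
Proof.
rewrite qadjE; suff -> : qdiff u (qflip d u) = [set d] by rewrite cards1.
apply/setP => j; rewrite !inE ffunE.
by case: (j =P d) => [->|]; [case: (u d) | rewrite eqxx].
Qed.

Lemma qflipK d : involutive (qflip d).
Proof. by move=> u; apply/ffunP => j; rewrite !ffunE; case: eqP; rewrite ?negbK. Qed.

Lemma qflipC d d' u : qflip d (qflip d' u) = qflip d' (qflip d u).
Proof. by apply/ffunP => j; rewrite !ffunE; case: eqP; case: eqP. Qed.

Lemma qflip2_neq d d' u : d != d' -> qflip d (qflip d' u) != u.
Proof.
move=> dd'; apply/negP => /eqP /ffunP /(_ d).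
by rewrite !ffunE eqxx (negbTE dd'); case: (u d).
Qed.

Lemma qflip_dir_inj d d' u : qflip d u = qflip d' u -> d = d'.
Proof.
by move=> /ffunP /(_ d); rewrite !ffunE eqxx; case: eqP => // _; case: (u d).
Qed.

Lemma qvertex_flip_ind (P : qvertex i -> Prop) :
  (forall u d, P u -> P (qflip d u)) -> forall u v, P u -> P v.
Proof.
move=> Pflip u v; move diff_n: #|qdiff u v| => n.
elim: n v diff_n => [|n IHn] v diff_n Pu.
  by have /eqP <- : u == v by rewrite -qdiff_eq0 -cards_eq0 diff_n.
have /card_gt0P [d uvd] : 0 < #|qdiff u v| by rewrite diff_n.
have diff_flip : qdiff u (qflip d v) = qdiff u v :\ d.
  apply/setP => j; rewrite !inE ffunE; case: (j =P d) => [->|_] //=.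
  by move: uvd; rewrite inE; case: (u d); case: (v d).
have := cardsD1 d (qdiff u v); rewrite uvd diff_n -diff_flip add1n => -[] /esym /IHn.
by move=> /(_ Pu) /(Pflip _ d); rewrite qflipK.
Qed.

Lemma qvertex0_eq (u v : qvertex 0) : u = v.
Proof. by apply/ffunP => -[]. Qed.

End Hypercube.

Section InsertCoordinate.
Variables (i : nat) (d0 : 'I_i.+1).
Implicit Types (w : qvertex i) (u : qvertex i.+1) (b : bool).

Definition qins b w : qvertex i.+1 :=
  [ffun j => if unlift d0 j is Some j' then w j' else b].
Definition qrest (u : qvertex i.+1) : qvertex i := [ffun j => u (lift d0 j)].

Lemma qins_d0 b w : qins b w d0 = b.
Proof. by rewrite ffunE unlift_none. Qed.

Lemma qins_rest u : qins (u d0) (qrest u) = u.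
Proof. by apply/ffunP => j; rewrite ffunE; case: unliftP => [j' ->|->]; rewrite ?ffunE. Qed.

Lemma qrest_ins b w : qrest (qins b w) = w.
Proof. by apply/ffunP => j; rewrite !ffunE liftK. Qed.

Lemma qins_inj b b' w w' : qins b w = qins b' w' -> b = b' /\ w = w'.
Proof.
move=> eq_ins; split; first by rewrite -(qins_d0 b w) eq_ins qins_d0.
by rewrite -(qrest_ins b w) eq_ins qrest_ins.
Qed.

Lemma qflip_ins_d0 b w : qflip d0 (qins b w) = qins (~~ b) w.
Proof.
apply/ffunP => j; rewrite !ffunE; case: unliftP => [j' ->|->]; last by rewrite eqxx.
by rewrite eq_sym (negbTE (neq_lift _ _)).
Qed.

Lemma qflip_ins_lift b w j : qflip (lift d0 j) (qins b w) = qins b (qflip j w).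
Proof.
apply/ffunP => j'; rewrite !ffunE; case: unliftP => [j'' ->|->].
  by rewrite (inj_eq (@lift_inj _ d0)) ffunE.
by rewrite (negbTE (neq_lift _ _)).
Qed.

Lemma notin_lift_imset (A : {set 'I_i}) : d0 \notin [set lift d0 j | j in A].
Proof. by apply/imsetP => -[j _ /eqP]; rewrite (negbTE (neq_lift _ _)). Qed.

Lemma qdiff_ins b b' w w' :
  qdiff (qins b w) (qins b' w') =
  (if b == b' then set0 else [set d0]) :|: [set lift d0 j | j in qdiff w w'].
Proof.
apply/setP => j; rewrite !inE !ffunE; case: unliftP => [j' ->|->].
  rewrite mem_imset ?inE; last exact: lift_inj.
  by case: (b == b'); rewrite ?inE // [lift _ _ == _]eq_sym (negbTE (neq_lift _ _)).
rewrite (negbTE (notin_lift_imset (qdiff w w'))) orbF.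
by case: b; case: b'; rewrite ?inE ?eqxx.
Qed.

Lemma qadj_ins b w w' : qadj (qins b w) (qins b w') = qadj w w'.
Proof. by rewrite !qadjE qdiff_ins eqxx set0U card_imset //; exact: lift_inj. Qed.

Lemma qadj_ins_neg b w w' : qadj (qins b w) (qins (~~ b) w') = (w == w').
Proof.
rewrite qadjE qdiff_ins; case: b; rewrite /= cardsU1 notin_lift_imset.
all: by rewrite card_imset ?add1n ?eqSS ?cards_eq0 ?qdiff_eq0 //; exact: lift_inj.
Qed.

End InsertCoordinate.

Section InducedCubes.
Variables (V : finType) (e : rel V).

Definition cube_map i (F : qvertex i -> V) :=
  injective F /\ forall u v, e (F u) (F v) = qadj u v.

Lemma induces_cubeP i (S : {set V}) :
  reflect (exists2 F : qvertex i -> V, cube_map F & S = F @: setT)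
          (induces_cube e i S).
Proof.
apply: (iffP existsP) => [[f /and3P [/injectiveP f_inj /eqP <- /forallP f_adj]]|].
  by exists f => //; split => // u v; apply/eqP/(forallP (f_adj u)).
case=> F [F_inj F_adj] ->; exists (finfun F); apply/and3P; split.
- by apply/injectiveP => u v; rewrite !ffunE; apply: F_inj.
- by apply/eqP/eq_imset => u; rewrite ffunE.
- by apply/forallP => u; apply/forallP => v; rewrite !ffunE F_adj.
Qed.

Lemma induces_cube_neq0 i (S : {set V}) : induces_cube e i S -> S != set0.
Proof.
by case/induces_cubeP => F _ ->; apply/set0Pn; exists (F [ffun => false]); apply: imset_f.
Qed.

Lemma cube_count0 : irreflexive e -> cube_count e 0 = #|V|.
Proof.
move=> e_irr; rewrite /cube_count -cardsT -(card_imset [set: V] (@set1_inj V)).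
apply: eq_card => S; rewrite inE; apply/induces_cubeP/imsetP.
  case=> F _ ->; exists (F [ffun => false]) => //; apply/setP => y; rewrite inE.
  apply/imsetP/eqP => [[u _ ->]|->]; last by exists [ffun => false].
  by rewrite (qvertex0_eq u [ffun => false]).
case=> x _ ->; exists (fun _ => x).
  by split=> [u v _|u v]; rewrite ?e_irr (qvertex0_eq u v) ?qadj_irr.
apply/setP => y; rewrite inE.
by apply/eqP/imsetP => [->|[u _ ->]] //; exists [ffun => false].
Qed.

Lemma cube_count_eq0 i : #|V| < 2 ^ i -> cube_count e i = 0.
Proof.
move=> V_small; apply/eqP; rewrite cards_eq0; apply/eqP/setP => S; rewrite !inE.
apply/negbTE/induces_cubeP => -[F [F_inj _] _].
by have := leq_card F F_inj; rewrite card_ffun card_bool card_ord leqNgt V_small.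
Qed.

Lemma coef_cube_poly i : ((cube_poly e)`_i = (cube_count e i)%:R)%R.
Proof.
rewrite coef_poly; case: ltnP => // V_lt_i; rewrite cube_count_eq0 //.
exact: leq_trans V_lt_i (ltnW (ltn_expl _ _)).
Qed.

End InducedCubes.

Section GraphEmbedding.
Variables (V W : finType) (eV : rel V) (eW : rel W).

Section OneEmbedding.
Variable g : V -> W.
Hypothesis g_adj : forall x y, eW (g x) (g y) = eV x y.

Lemma cube_map_comp i (F : qvertex i -> V) :
  injective g -> cube_map eV F -> cube_map eW (g \o F).
Proof.
by move=> g_inj [F_inj F_adj]; split=> [|u v /=]; [exact: inj_comp | rewrite g_adj].
Qed.

Lemma induces_cube_imset i (S : {set V}) :
  injective g -> induces_cube eV i S -> induces_cube eW i (g @: S).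
Proof.
move=> g_inj /induces_cubeP [F F_cube ->]; rewrite -imset_comp.
by apply/induces_cubeP; exists (g \o F) => //; exact: cube_map_comp.
Qed.

Lemma induces_cube_preimset i (r : W -> V) (S : {set W}) :
  {in S, cancel r g} -> induces_cube eW i S ->
  induces_cube eV i (r @: S) /\ S = g @: (r @: S).
Proof.
move=> rK S_cube; split; last first.
  by rewrite -imset_comp -[LHS]imset_id; apply/eq_in_imset => y /rK.
case/induces_cubeP: S_cube rK => F [F_inj F_adj] -> rK.
have FK u : g (r (F u)) = F u by rewrite rK ?imset_f.
rewrite -imset_comp; apply/induces_cubeP; exists (r \o F) => //; split.
  by move=> u v /= ruv; apply: F_inj; rewrite -FK ruv FK.
by move=> u v /=; rewrite -g_adj !FK.
Qed.

End OneEmbedding.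

Section Prism.
Variables g0 g1 : V -> W.
Hypotheses (g0_inj : injective g0) (g1_inj : injective g1).
Hypotheses (g0_adj : forall x y, eW (g0 x) (g0 y) = eV x y)
           (g1_adj : forall x y, eW (g1 x) (g1 y) = eV x y).
Hypotheses (g01_adj : forall x y, eW (g0 x) (g1 y) = (x == y))
           (g10_adj : forall x y, eW (g1 x) (g0 y) = (x == y)).
Hypothesis g01_neq : forall x y, g0 x != g1 y.

Definition prism (T : {set V}) := g0 @: T :|: g1 @: T.

Lemma prism_inj : injective prism.
Proof.
move=> T T' eqTT'.
have memT (U : {set V}) x : (x \in U) = (g0 x \in prism U).
  rewrite in_setU mem_imset //; case: (x \in U) => //=; apply/esym/imsetP.
  by case=> y _ /eqP; rewrite (negbTE (g01_neq _ _)).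
by apply/setP => x; rewrite memT eqTT' -memT.
Qed.

Lemma induces_cube_prism i T :
  induces_cube eV i T -> induces_cube eW i.+1 (prism T).
Proof.
case/induces_cubeP => F [F_inj F_adj] ->.
pose G (u : qvertex i.+1) := (if u ord0 then g1 else g0) (F (qrest ord0 u)).
have GE b w : G (qins ord0 b w) = (if b then g1 else g0) (F w).
  by rewrite /G qins_d0 qrest_ins.
apply/induces_cubeP; exists G; last first.
  apply/setP => y; apply/setUP/imsetP => [|[u _ ->]].
    case=> /imsetP [_ /imsetP [w _ ->] ->].
      by exists (qins ord0 false w); rewrite ?GE.
    by exists (qins ord0 true w); rewrite ?GE.
  rewrite -(qins_rest ord0 u) GE.
  by case: (u ord0); [right | left]; do 2!apply: imset_f.
split=> u v; rewrite -(qins_rest ord0 u) -(qins_rest ord0 v) !GE.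
  case: (u ord0); case: (v ord0) => /= eq_G.
  - by rewrite (F_inj _ _ (g1_inj eq_G)).
  - by have := g01_neq (F (qrest ord0 v)) (F (qrest ord0 u)); rewrite eq_G eqxx.
  - by have := g01_neq (F (qrest ord0 u)) (F (qrest ord0 v)); rewrite eq_G eqxx.
  - by rewrite (F_inj _ _ (g0_inj eq_G)).
case: (u ord0); case: (v ord0).
- by rewrite g1_adj F_adj qadj_ins.
- by rewrite g10_adj (inj_eq F_inj) (qadj_ins_neg ord0 true).
- by rewrite g01_adj (inj_eq F_inj) (qadj_ins_neg ord0 false).
- by rewrite g0_adj F_adj qadj_ins.
Qed.

End Prism.
End GraphEmbedding.

(** * Cubes and levels *)

Lemma sum_nat_eq_ord N p : \sum_(a < N) ((a : nat) == p : nat) = (p < N).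
Proof.
elim: N => [|N IHN]; first by rewrite big_ord0.
rewrite big_ord_recr /= IHN ltnS; case: (leqP N p) => [Np|pN].
  by rewrite eqn_leq Np.
by rewrite (gtn_eqF pN) ltnW.
Qed.

Lemma sum_pred_card (T : finType) (A : {set T}) (P : pred T) :
  \sum_(x in A) P x = #|[set x in A | P x]|.
Proof.
rewrite -sum1_card [RHS](eq_bigl (fun x => (x \in A) && P x)) => [|x]; last by rewrite !inE.
by rewrite big_mkcondr /=; apply: eq_bigr => x _; case: (P x).
Qed.

Lemma sum_ord_recr_pred N (F : nat -> nat) : 0 < N ->
  \sum_(a < N) F a = \sum_(a < N.-1) F a + F N.-1.
Proof. by case: N => // N _; rewrite big_ord_recr. Qed.

Section Levels.
Variables (W : finType) (e : rel W) (h : W -> nat).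
Hypothesis adj_level : forall x y, e x y -> h x != h y -> h x = (h y).+1 \/ h y = (h x).+1.
Hypothesis adj_level_uniq :
  forall a b c, e a b -> e c b -> h a = h c -> h a != h b -> a = c.

Section LevelChange.
Variables (i : nat) (f : qvertex i -> W).
Hypothesis f_cube : cube_map e f.

Definition level_change d u := h (f (qflip d u)) != h (f u).

Let f_adj u d : e (f u) (f (qflip d u)).
Proof. by rewrite f_cube.2 qadj_flip. Qed.

Let f_adj' u d : e (f (qflip d u)) (f u).
Proof. by rewrite f_cube.2 qadj_sym qadj_flip. Qed.

Let adj_level' x y : e x y -> [\/ h x = h y, h x = (h y).+1 | h y = (h x).+1].
Proof. by move=> xy; case: (eqVneq (h x) (h y)) => [|/(adj_level xy)[]]; constructor. Qed.

(* If both d and d' changed the level at u, then in the square u, d u, d' d u,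
   d' u uniqueness of neighbours on a level would put d u, d' u on distinct levels
   and u, d' d u on distinct levels, which is impossible when the levels of
   adjacent vertices differ by at most one. *)
Lemma level_change_uniq u d d' : level_change d u -> level_change d' u -> d = d'.
Proof.
move=> /eqP ch_d /eqP ch_d'; apply/eqP/negPn/negP => dd'.
have lvl_flips : h (f (qflip d u)) != h (f (qflip d' u)).
  apply/eqP => eq_lvl; move/negP: dd'; apply; apply/eqP/(qflip_dir_inj (u := u))/f_cube.1.
  by apply: adj_level_uniq (f_adj' u d) (f_adj' u d') eq_lvl _; apply/eqP.
have lvl_opp : h (f u) != h (f (qflip d' (qflip d u))).
  apply/eqP => eq_lvl; have d'd : d' != d by rewrite eq_sym.
  apply/(negP (qflip2_neq u d'd))/eqP/esym/f_cube.1.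
  apply: (adj_level_uniq (f_adj u d) (f_adj' (qflip d u) d') eq_lvl).
  by apply/eqP => eq_lvl'; apply: ch_d; rewrite -eq_lvl'.
have := adj_level' (f_adj u d); have := adj_level' (f_adj u d').
have := adj_level' (f_adj (qflip d u) d'); have := adj_level' (f_adj (qflip d' u) d).
move: lvl_flips lvl_opp ch_d ch_d'; rewrite (qflipC d d' u).
by move=> /eqP ? /eqP ? ? ? [] ? [] ? [] ? [] ?; lia.
Qed.

Lemma level_change_flip d d' u : level_change d u -> level_change d (qflip d' u).
Proof.
move=> ch_d; have ch_d_back : level_change d (qflip d u).
  by rewrite /level_change qflipK eq_sym.
have [<-//|dd'] := eqVneq d d'.
have stay v : level_change d v -> h (f (qflip d' v)) = h (f v).
  move=> ch_dv; apply/eqP/negP => /negP ch_d'v.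
  by move/eqP: dd'; apply; apply: level_change_uniq ch_dv ch_d'v.
by rewrite /level_change qflipC stay // (stay u).
Qed.

Lemma level_change_all d u v : level_change d u -> level_change d v.
Proof.
by apply: (@qvertex_flip_ind _ (level_change d)) => w d'; apply: level_change_flip.
Qed.

End LevelChange.

Definition level_prism i (F0 F1 : qvertex i -> W) p0 p1 :=
  [/\ cube_map e F0, cube_map e F1, forall w, e (F0 w) (F1 w), p0 != p1 &
      forall w, h (F0 w) = p0 /\ h (F1 w) = p1].

Lemma cube_map_level_const i (f : qvertex i -> W) u0 :
  cube_map e f -> (forall d, ~~ level_change f d u0) -> forall u, h (f u) = h (f u0).
Proof.
move=> f_cube no_ch u.
apply: (@qvertex_flip_ind _ (fun v => h (f v) = h (f u0)) _ u0) => //.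
move=> v d <-; apply/eqP/negPn/negP => /(level_change_all f_cube u0).
by rewrite (negbTE (no_ch d)).
Qed.

Lemma cube_map_level_split i (f : qvertex i -> W) d0 u0 :
  cube_map e f -> level_change f d0 u0 ->
  exists i' (F0 F1 : qvertex i' -> W) p0 p1,
    [/\ i = i'.+1, level_prism F0 F1 p0 p1 & f @: setT = F0 @: setT :|: F1 @: setT].
Proof.
case: i f d0 u0 => [|i] f d0 u0 f_cube ch0; first by have := ltn_ord d0.
pose w0 := [ffun => false] : qvertex i.
have ch_all v : level_change f d0 v := level_change_all f_cube v ch0.
have lvl_half b w : h (f (qins d0 b w)) = h (f (qins d0 b w0)).
  pose P w := h (f (qins d0 b w)) = h (f (qins d0 b w0)).
  apply: (@qvertex_flip_ind _ P _ w0) => //.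
  move=> v j; rewrite /P => <-; rewrite -qflip_ins_lift; apply/eqP/negPn/negP => ch_j.
  by move/eqP: (neq_lift d0 j); apply; exact: (level_change_uniq f_cube (ch_all _) ch_j).
have half_cube b : cube_map e (fun w => f (qins d0 b w)).
  by split=> [w w' /f_cube.1 /qins_inj []|w w'] //; rewrite f_cube.2 qadj_ins.
exists i, (fun w => f (qins d0 false w)), (fun w => f (qins d0 true w)).
exists (h (f (qins d0 false w0))), (h (f (qins d0 true w0))); split => //.
  split=> [||w||w]; rewrite ?lvl_half //.
  - by rewrite -[true]/(~~ false) -qflip_ins_d0 f_cube.2 qadj_flip.
  - by have := ch_all (qins d0 false w0); rewrite /level_change qflip_ins_d0 eq_sym.
apply/setP => y; apply/imsetP/setUP => [[u _ ->]|[] /imsetP [w _ ->]]; last 2 first.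
- by exists (qins d0 false w).
- by exists (qins d0 true w).
by rewrite -(qins_rest d0 u); case: (u d0); [right | left]; apply: imset_f.
Qed.

Lemma induces_cube_levels i S : induces_cube e i S ->
  (exists p, {in S, forall x, h x = p}) \/
  exists i' (F0 F1 : qvertex i' -> W) p0 p1,
    [/\ i = i'.+1, level_prism F0 F1 p0 p1 & S = F0 @: setT :|: F1 @: setT].
Proof.
case/induces_cubeP => f f_cube ->{S}; pose u0 := [ffun => false] : qvertex i.
case: (pickP (fun d => level_change f d u0)) => [d0 ch0|no_ch].
  by right; apply: cube_map_level_split f_cube ch0.
left; exists (h (f u0)) => _ /imsetP [u _ ->].
by apply: cube_map_level_const => // d; apply/negbT/no_ch.
Qed.

Lemma level_prism_sym i (F0 F1 : qvertex i -> W) p0 p1 :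
  symmetric e -> level_prism F0 F1 p0 p1 -> level_prism F1 F0 p1 p0.
Proof.
move=> e_sym [F0_cube F1_cube F01 p01 lvlF].
split=> // [w||w]; first by rewrite e_sym.
  by rewrite eq_sym.
by case: (lvlF w).
Qed.

Definition on_level a (S : {set W}) := [forall x in S, h x == a].
Definition across_levels a (S : {set W}) :=
  [&& [forall x in S, (h x == a) || (h x == a.+1)],
      [exists x in S, h x == a] & [exists x in S, h x == a.+1]].

Definition on_level_count i a := #|[set S | induces_cube e i S & on_level a S]|.
Definition across_levels_count i a := #|[set S | induces_cube e i S & across_levels a S]|.

Lemma across_levels_prism a i S : symmetric e ->
  induces_cube e i S -> across_levels a S ->
  exists i' (F0 F1 : qvertex i' -> W),
    [/\ i = i'.+1, level_prism F0 F1 a a.+1 & S = F0 @: setT :|: F1 @: setT].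
Proof.
move=> e_sym /induces_cube_levels [[p lvlS]|].
  case/and3P=> _ /exists_inP [x xS /eqP lvl_x] /exists_inP [y yS /eqP].
  by rewrite lvlS // -(lvlS x xS) lvl_x; lia.
case=> i' [F0 [F1 [p0 [p1 [-> F01_prism ->]]]]] /and3P [_ lvl_a lvl_a1].
exists i'; have [_ _ _ _ lvlF] := F01_prism.
have lvl_union x : x \in F0 @: setT :|: F1 @: setT -> h x = p0 \/ h x = p1.
  by case/setUP => /imsetP [w _ ->]; [left | right]; case: (lvlF w).
move/exists_inP: lvl_a => [x /lvl_union lvl_x /eqP hx].
move/exists_inP: lvl_a1 => [y /lvl_union lvl_y /eqP hy].
have [[p0a p1a]|[p0a p1a]] : (p0 = a /\ p1 = a.+1) \/ (p0 = a.+1 /\ p1 = a).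
- by case: F01_prism => _ _ _ /eqP; lia.
- by subst; exists F0, F1.
- by subst; exists F1, F0; rewrite setUC; split=> //; apply: level_prism_sym.
Qed.

Lemma level_classes_const m S p : S != set0 -> {in S, forall x, h x = p} -> p <= m ->
  \sum_(a < m.+1) on_level a S = 1 /\ \sum_(a < m) across_levels a S = 0.
Proof.
move=> /set0Pn [x0 x0S] lvlS p_le_m; split.
  rewrite (eq_bigr (fun a : 'I_m.+1 => ((a : nat) == p) : nat)) => [|a _].
    by rewrite sum_nat_eq_ord ltnS p_le_m.
  congr nat_of_bool; apply/forall_inP/eqP => [/(_ x0 x0S)|->].
    by rewrite lvlS // eq_sym => /eqP.
  by move=> x xS; rewrite lvlS.
rewrite big1 // => a _; apply/eqP; rewrite eqb0; apply/and3P.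
case=> _ /exists_inP [x xS /eqP hx] /exists_inP [y yS /eqP].
by rewrite lvlS // -(lvlS x xS) hx; lia.
Qed.

Lemma level_classes_prism m i (F0 F1 : qvertex i -> W) p0 p1 S :
  (forall x, h x <= m) -> level_prism F0 F1 p0 p1 -> S = F0 @: setT :|: F1 @: setT ->
  \sum_(a < m.+1) on_level a S = 0 /\ \sum_(a < m) across_levels a S = 1.
Proof.
move=> h_le [_ _ F01 p01 lvlF] ->; pose w0 := [ffun => false] : qvertex i.
have [lvl0 lvl1] := lvlF w0.
have lvl_union x : x \in F0 @: setT :|: F1 @: setT -> h x = p0 \/ h x = p1.
  by case/setUP => /imsetP [w _ ->]; [left | right]; case: (lvlF w).
have F0S : F0 w0 \in F0 @: setT :|: F1 @: setT by rewrite inE imset_f.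
have F1S : F1 w0 \in F0 @: setT :|: F1 @: setT by rewrite inE imset_f ?orbT.
have p01_succ : p0 = p1.+1 \/ p1 = p0.+1.
  by rewrite -lvl0 -lvl1; apply: adj_level; rewrite ?lvl0 ?lvl1.
split.
  apply: big1 => a _; apply/eqP; rewrite eqb0; apply/forall_inP => lvl_a; move: p01.
  by rewrite -lvl0 -lvl1 (eqP (lvl_a _ F0S)) (eqP (lvl_a _ F1S)) eqxx.
rewrite (eq_bigr (fun a : 'I_m => ((a : nat) == minn p0 p1) : nat)) => [|a _].
  rewrite sum_nat_eq_ord; have := h_le (F0 w0); have := h_le (F1 w0).
  by rewrite lvl0 lvl1; case: p01_succ => ->; lia.
congr nat_of_bool; apply/and3P/eqP => [[_]|a_min].
  move=> /exists_inP [x /lvl_union lvl_x /eqP hx] /exists_inP [y /lvl_union lvl_y /eqP hy].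
  by lia.
split.
- by apply/forall_inP => x /lvl_union [] ->; case: p01_succ; lia.
- by apply/exists_inP; case: p01_succ => p01';
    [exists (F1 w0) | exists (F0 w0)]; rewrite // ?lvl0 ?lvl1; apply/eqP; lia.
- by apply/exists_inP; case: p01_succ => p01';
    [exists (F0 w0) | exists (F1 w0)]; rewrite // ?lvl0 ?lvl1; apply/eqP; lia.
Qed.

Lemma cube_level_classes m i S : (forall x, h x <= m) -> induces_cube e i S ->
  \sum_(a < m.+1) on_level a S + \sum_(a < m) across_levels a S = 1.
Proof.
move=> h_le S_cube; have S_neq0 := induces_cube_neq0 S_cube.
case: (induces_cube_levels S_cube) => [[p lvlS]|[i' [F0 [F1 [p0 [p1 [_ F01 S_eq]]]]]]].
  have /set0Pn [x0 x0S] := S_neq0.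
  have p_le_m : p <= m by rewrite -(lvlS x0 x0S).
  by have [-> ->] := level_classes_const S_neq0 lvlS p_le_m.
by have [-> ->] := level_classes_prism h_le F01 S_eq.
Qed.

Lemma cube_count_levels m i : (forall x, h x <= m) ->
  cube_count e i = \sum_(a < m.+1) on_level_count i a
                 + \sum_(a < m) across_levels_count i a.
Proof.
move=> h_le; rewrite /cube_count -sum1_card.
rewrite (eq_bigr (fun S => \sum_(a < m.+1) on_level a S + \sum_(a < m) across_levels a S)).
  rewrite big_split /= [X in X + _]exchange_big [X in _ + X]exchange_big /=.
  by congr (_ + _); apply: eq_bigr => a _; rewrite sum_pred_card;
    apply: eq_card => S; rewrite !inE.
by move=> S; rewrite inE => /(cube_level_classes h_le) ->.
Qed.

Lemma count_on_level_empty a i : (forall x, h x != a) ->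
  on_level_count i a = 0.
Proof.
move=> no_a; apply/eqP; rewrite cards_eq0; apply/eqP/setP => S; rewrite !inE.
apply/negbTE/andP => -[/induces_cube_neq0/set0Pn [x xS] /forall_inP /(_ x xS)].
by rewrite (negbTE (no_a x)).
Qed.

Lemma count_across_levels_empty a i : (forall x, h x != a.+1) ->
  across_levels_count i a = 0.
Proof.
move=> no_a1; apply/eqP; rewrite cards_eq0; apply/eqP/setP => S; rewrite !inE.
apply/negbTE/andP => -[_ /and3P [_ _ /exists_inP [x _]]].
by rewrite (negbTE (no_a1 x)).
Qed.

Section LevelEmbeddings.
Variables (V : finType) (eV : rel V).

Lemma count_on_level (g : V -> W) (r : W -> V) a i :
  injective g -> (forall x y, e (g x) (g y) = eV x y) -> (forall x, h (g x) = a) ->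
  (forall w, h w = a -> g (r w) = w) ->
  on_level_count i a = cube_count eV i.
Proof.
move=> g_inj g_adj g_lvl rK.
rewrite /cube_count -(card_imset _ (imset_inj g_inj)); apply: eq_card => S.
rewrite !inE; apply/andP/imsetP => [[S_cube /forall_inP S_lvl]|[T]].
  have rKS : {in S, cancel r g} by move=> y /S_lvl /eqP /rK.
  have [T_cube ->] := induces_cube_preimset g_adj rKS S_cube.
  by exists (r @: S); rewrite ?inE.
rewrite inE => T_cube ->; split; first exact: induces_cube_imset.
by apply/forall_inP => _ /imsetP [x _ ->]; rewrite g_lvl.
Qed.

Section Across.
Variables (g0 g1 : V -> W) (r1 : W -> V) (a : nat).
Hypotheses (e_sym : symmetric e) (g0_inj : injective g0) (g1_inj : injective g1).
Hypotheses (g0_adj : forall x y, e (g0 x) (g0 y) = eV x y)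
           (g1_adj : forall x y, e (g1 x) (g1 y) = eV x y).
Hypotheses (g0_lvl : forall x, h (g0 x) = a) (g1_lvl : forall x, h (g1 x) = a.+1).
Hypothesis g01_adj : forall x, e (g0 x) (g1 x).
Hypothesis adj_g1_lvl : forall w y, h w = a -> e w (g1 y) -> w = g0 y.
Hypothesis r1K : forall w, h w = a.+1 -> g1 (r1 w) = w.

Let g01_adj_eq x y : e (g0 x) (g1 y) = (x == y).
Proof.
apply/idP/eqP => [/adj_g1_lvl|->]; last exact: g01_adj.
by move=> /(_ (g0_lvl x)) /g0_inj.
Qed.

Let g10_adj_eq x y : e (g1 x) (g0 y) = (x == y).
Proof. by rewrite e_sym g01_adj_eq eq_sym. Qed.

Let g01_neq x y : g0 x != g1 y.
Proof. by apply/eqP => /(congr1 h); rewrite g0_lvl g1_lvl; lia. Qed.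

Lemma prism_across_levels T : T != set0 -> across_levels a (prism g0 g1 T).
Proof.
case/set0Pn => t tT; apply/and3P; split.
- by apply/forall_inP => _ /setUP [] /imsetP [x _ ->]; rewrite ?g0_lvl ?g1_lvl eqxx ?orbT.
- by apply/exists_inP; exists (g0 t); rewrite ?g0_lvl // inE imset_f.
- by apply/exists_inP; exists (g1 t); rewrite ?g1_lvl // inE imset_f ?orbT.
Qed.

Lemma across_levels_prism_image i S : induces_cube e i.+1 S -> across_levels a S ->
  exists2 T, induces_cube eV i T & S = prism g0 g1 T.
Proof.
move=> S_cube S_across.
have := across_levels_prism e_sym S_cube S_across.
case=> i' [F0 [F1 [[ii'] [_ F1_cube F01 _ lvlF] ->]]]; subst i'.
have F1K : {in F1 @: setT, cancel r1 g1}.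
  by move=> _ /imsetP [w _ ->]; rewrite r1K //; case: (lvlF w).
have F0E w : F0 w = g0 (r1 (F1 w)).
  by apply: adj_g1_lvl; [case: (lvlF w) | rewrite F1K ?imset_f ?F01].
have F1_cube_set : induces_cube e i (F1 @: setT) by apply/induces_cubeP; exists F1.
have [T_cube F1_eq] := induces_cube_preimset g1_adj F1K F1_cube_set.
exists (r1 @: (F1 @: setT)) => //; rewrite /prism -F1_eq -!imset_comp.
by congr (_ :|: _); apply: eq_imset => w; rewrite /= -F0E.
Qed.

Lemma count_across_levels i :
  across_levels_count i a = if i is i'.+1 then cube_count eV i' else 0.
Proof.
case: i => [|i].
  apply/eqP; rewrite cards_eq0; apply/eqP/setP => S; rewrite !inE.
  by apply/negbTE/andP => -[S_cube /(across_levels_prism e_sym S_cube)] [? [? [? []]]].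
rewrite /cube_count -(card_imset _ (prism_inj g0_inj g01_neq)); apply: eq_card => S.
rewrite !inE; apply/andP/imsetP => [[S_cube S_across]|[T]].
  have [T T_cube ->] := across_levels_prism_image S_cube S_across.
  by exists T; rewrite ?inE.
rewrite inE => T_cube ->; split; last exact: prism_across_levels (induces_cube_neq0 T_cube).
exact: (induces_cube_prism g0_inj g1_inj g0_adj g1_adj g01_adj_eq g10_adj_eq g01_neq
         T_cube).
Qed.

End Across.
End LevelEmbeddings.
End Levels.

(** * k-Pell words *)

Section WordAdjacency.
Variable k : nat.
Hypothesis k_gt0 : 0 < k.
Implicit Types s t : seq nat.

(* Words are read through [nth 0]: a raised letter is positive, so it always lies
   inside the word and no length bound is needed. *)
Definition raise_letter s t := exists p,
  [/\ forall q, q != p -> nth 0 s q = nth 0 t q,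
      (nth 0 s p).+1 = nth 0 t p & nth 0 t p <= k - 1].

Definition raise_pair s t := exists p,
  [/\ forall q, q != p -> q != p.+1 -> nth 0 s q = nth 0 t q,
      nth 0 s p = k - 1, nth 0 s p.+1 = k - 1, nth 0 t p = k & nth 0 t p.+1 = k].

Definition word_raise s t := raise_letter s t \/ raise_pair s t.
Definition word_adj s t := word_raise s t \/ word_raise t s.

Lemma word_raise_irr s : ~ word_raise s s.
Proof. by case=> -[p []] _; lia. Qed.

Lemma word_adj_irr s : ~ word_adj s s.
Proof. by case=> /word_raise_irr. Qed.

Lemma word_raise_cons a s t : word_raise (a :: s) (a :: t) <-> word_raise s t.
Proof.
split=> [[] [[|p] []]|[] [p []]] //=; try lia.
- by move=> eq_st *; left; exists p; split=> // q qp; apply: (eq_st q.+1).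
- by move=> eq_st *; right; exists p; split=> // q qp qp1; apply: (eq_st q.+1).
- by move=> eq_st *; left; exists p.+1; split=> // -[|q] //= qp; apply: eq_st.
- by move=> eq_st *; right; exists p.+1; split=> // -[|q] //= qp qp1; apply: eq_st.
Qed.

Lemma word_adj_cons a s t : word_adj (a :: s) (a :: t) <-> word_adj s t.
Proof. by rewrite /word_adj !word_raise_cons. Qed.

Definition letter_change s t :=
  [/\ forall q, 0 < q -> nth 0 s q = nth 0 t q,
      nth 0 s 0 = (nth 0 t 0).+1 \/ nth 0 t 0 = (nth 0 s 0).+1,
      nth 0 s 0 <= k - 1 & nth 0 t 0 <= k - 1].

Definition pair_change s t :=
  (forall q, 1 < q -> nth 0 s q = nth 0 t q) /\
  ([/\ nth 0 s 0 = k - 1, nth 0 s 1 = k - 1, nth 0 t 0 = k & nth 0 t 1 = k] \/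
   [/\ nth 0 s 0 = k, nth 0 s 1 = k, nth 0 t 0 = k - 1 & nth 0 t 1 = k - 1]).

Lemma word_adj_head s t : word_adj s t -> nth 0 s 0 != nth 0 t 0 ->
  letter_change s t \/ pair_change s t.
Proof.
move=> + /eqP s0t0; case=> -[] [[|p] [eq_st]] //;
  try by case: s0t0; first [apply: eq_st | apply/esym/eq_st].
- by move=> *; left; split; [move=> q ?; apply: eq_st | right | |]; lia.
- by move=> *; right; split; [move=> q ?; apply: eq_st | left; split]; lia.
- by move=> *; left; split; [move=> q ?; apply/esym/eq_st | left | |]; lia.
- by move=> *; right; split; [move=> q ?; apply/esym/eq_st | right; split]; lia.
Qed.

Lemma word_adj_head_step s t : word_adj s t -> nth 0 s 0 != nth 0 t 0 ->
  nth 0 s 0 = (nth 0 t 0).+1 \/ nth 0 t 0 = (nth 0 s 0).+1.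
Proof. by move=> /word_adj_head/[apply] -[[_ *]|[_ [[*]|[*]]]]; lia. Qed.

Lemma word_adj_head_uniq s t u : word_adj s t -> word_adj u t ->
  nth 0 s 0 = nth 0 u 0 -> nth 0 s 0 != nth 0 t 0 -> forall q, nth 0 s q = nth 0 u q.
Proof.
move=> st ut s0u0 s0t0; have u0t0 : nth 0 u 0 != nth 0 t 0 by rewrite -s0u0.
case: (word_adj_head st s0t0) => [[eq_st s_step s0k t0k]|[eq_st s_pair]];
  case: (word_adj_head ut u0t0) => [[eq_ut u_step u0k t0k']|[eq_ut u_pair]];
  case=> [//|[|q]]; try by rewrite eq_st // eq_ut.
- by case: u_pair => -[]; lia.
- by case: s_pair => -[]; lia.
- by case: s_pair u_pair => -[] + + + + [] []; lia.
Qed.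

End WordAdjacency.

Section PellVertices.
Variable k : nat.
Hypothesis k_gt1 : 1 < k.
Local Notation V n := (pell_vertex n k).
Let k_gt0 : 0 < k := ltnW k_gt1.

Definition word n (x : V n) : seq nat := map val (val x).
Definition head_letter n (x : V n) := nth 0 (word x) 0.

Lemma size_word n (x : V n) : size (word x) = n.
Proof. by rewrite size_map size_tuple. Qed.

Lemma pellb_word n (x : V n) : pellb k (word x).
Proof. exact: valP x. Qed.

Lemma word_inj n : injective (@word n).
Proof. by move=> x y /(inj_map val_inj) /val_inj /val_inj. Qed.

Lemma nth_word_le n (x : V n) q : nth 0 (word x) q <= k.
Proof.
case: (ltnP q n) => [q_lt_n|]; last by move=> n_le_q; rewrite nth_default ?size_word.
by rewrite (nth_map ord0) ?size_tuple // -ltnS ltn_ord.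
Qed.

Lemma letter_word n (x : V n) i : letter (val x) i = nth 0 (word x) i.
Proof. by rewrite /letter (tnth_nth ord0) (nth_map ord0) // size_tuple. Qed.

Lemma nth_word_gt0 n (x : V n) q : 0 < nth 0 (word x) q -> q < n.
Proof. by case: (ltnP q n) => // n_le_q; rewrite nth_default ?size_word. Qed.

Lemma step1_raise n (x y : V n) :
  step1 (val x) (val y) <-> raise_letter k (word x) (word y).
Proof.
split=> [/existsP [i /and3P [/forallP eq_xy]]|[p [eq_xy xy_p y_p]]].
  rewrite !letter_word => /eqP xy_i y_i; exists (val i); split=> // q qi.
  case: (ltnP q n) => [q_lt_n|n_le_q]; last by rewrite !nth_default ?size_word.
  have /implyP := eq_xy (Ordinal q_lt_n); rewrite !letter_word => eq_q; apply/eqP/eq_q.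
  by apply: contra qi => /eqP <-.
have p_lt_n : p < n by apply: (nth_word_gt0 (x := y)); rewrite -xy_p.
apply/existsP; exists (Ordinal p_lt_n); apply/and3P; split; rewrite ?letter_word ?xy_p //.
by apply/forallP => j; apply/implyP => jp; rewrite !letter_word eq_xy.
Qed.

Lemma step2_raise n (x y : V n) :
  step2 (val x) (val y) <-> raise_pair k (word x) (word y).
Proof.
split=> [/existsP [i /existsP [i' /and4P [/eqP ii' + + /and3P [+ + /forallP eq_xy]]]]|].
  rewrite !letter_word ii' => /eqP x_i /eqP x_i1 /eqP y_i /eqP y_i1.
  exists (val i); split=> // q qi qi1.
  case: (ltnP q n) => [q_lt_n|n_le_q]; last by rewrite !nth_default ?size_word.
  have /implyP := eq_xy (Ordinal q_lt_n); rewrite !letter_word => eq_q; apply/eqP/eq_q.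
  by rewrite -(inj_eq val_inj) -[_ == i'](inj_eq val_inj) /= ii' qi qi1.
case=> p [eq_xy x_p x_p1 y_p y_p1].
have p1_lt_n : p.+1 < n by apply: (nth_word_gt0 (x := y)); rewrite y_p1; lia.
apply/existsP; exists (Ordinal (ltnW p1_lt_n)); apply/existsP; exists (Ordinal p1_lt_n).
rewrite !letter_word /= x_p x_p1 y_p y_p1 !eqxx /=.
apply/forallP => j; apply/implyP => /andP [jp jp1]; rewrite !letter_word eq_xy //.
Qed.

Lemma pell_adjP n (x y : V n) : reflect (word_adj k (word x) (word y)) (pell_adj x y).
Proof.
apply: (iffP idP); rewrite /word_adj /word_raise -!step1_raise -!step2_raise.
  by case/or4P => ?; [left; left | right; left | left; right | right; right].
case=> -[] ?; apply/or4P.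
all: by [constructor 1 | constructor 3 | constructor 2 | constructor 4].
Qed.

Lemma pell_adj_sym n : symmetric (@pell_adj n k).
Proof.
move=> x y; rewrite /pell_adj /=.
by case: (step1 _ _); case: (step1 _ _); case: (step2 _ _); case: (step2 _ _).
Qed.

Lemma pell_adj_irr n : irreflexive (@pell_adj n k).
Proof. by move=> x; apply/negbTE/negP => /pell_adjP /(word_adj_irr k_gt0). Qed.

Lemma head_letter_le n (x : V n) : head_letter x <= k.
Proof. exact: nth_word_le. Qed.

Lemma pell_adj_head_step n (x y : V n) :
  pell_adj x y -> head_letter x != head_letter y ->
  head_letter x = (head_letter y).+1 \/ head_letter y = (head_letter x).+1.
Proof. by move=> /pell_adjP /(word_adj_head_step k_gt0). Qed.

Lemma pell_adj_head_uniq n (x y z : V n) : pell_adj x y -> pell_adj z y ->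
  head_letter x = head_letter z -> head_letter x != head_letter y -> x = z.
Proof.
move=> /pell_adjP xy /pell_adjP zy xz xy0; apply: word_inj.
apply: (@eq_from_nth _ 0); first by rewrite !size_word.
by move=> q _; exact: (word_adj_head_uniq k_gt0 xy zy xz xy0 q).
Qed.

End PellVertices.

Section PellConstructions.
Variable k : nat.
Hypothesis k_gt1 : 1 < k.
Local Notation V n := (pell_vertex n k).
Let k_gt0 : 0 < k := ltnW k_gt1.

Lemma pellb_zero n : pellb k (map val (nseq_tuple n (ord0 : 'I_k.+1))).
Proof. by rewrite /= map_nseq; elim: n => //= n ->; rewrite eq_sym gtn_eqF. Qed.

Definition pell_zero n : V n := exist _ (nseq_tuple n ord0) (pellb_zero n).

(* [insubd] falls back to [pell_zero] outside the intended domain: [pcons j] is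
   only used with j < k, [ptail] on words not starting with k, and [ptail2] on
   words starting with kk. *)
Definition pcons n (j : nat) (x : V n) : V n.+1 :=
  insubd (pell_zero n.+1) (cons_tuple (inord j) (val x)).
Definition pconsKK n (x : V n) : V n.+2 :=
  insubd (pell_zero n.+2) (cons_tuple ord_max (cons_tuple ord_max (val x))).
Definition ptail n (x : V n.+1) : V n := insubd (pell_zero n) (behead_tuple (val x)).
Definition ptail2 n (x : V n.+2) : V n :=
  insubd (pell_zero n) (behead_tuple (behead_tuple (val x))).

Lemma word_pcons n j (x : V n) : j < k -> word (pcons j x) = j :: word x.
Proof.
move=> j_lt_k; have val_j : nat_of_ord (inord j : 'I_k.+1) = j.
  by rewrite inordK // ltnS ltnW.
by rewrite /word /pcons val_insubd /= val_j ltn_eqF // pellb_word /= val_j.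
Qed.

Lemma word_pconsKK n (x : V n) : word (pconsKK x) = k :: k :: word x.
Proof.
have pell_KK : pellb k (k :: k :: word x) by rewrite /= eqxx pellb_word.
by rewrite /word /pconsKK val_insubd ifT.
Qed.

Lemma pellb_behead s : pellb k s -> nth 0 s 0 != k -> pellb k (behead s).
Proof. by case: s => //= a s; case: eqP. Qed.

Lemma pellb_behead2 s : pellb k s -> nth 0 s 0 = k ->
  nth 0 s 1 = k /\ pellb k (behead (behead s)).
Proof.
case: s => [|a [|b s]] /= pell_s ak; first by move: k_gt0; rewrite -ak.
  by move: pell_s; rewrite ak eqxx.
by move: pell_s; rewrite ak eqxx => /andP [/eqP].
Qed.

Lemma word_ptail n (x : V n.+1) : head_letter x != k -> word (ptail x) = behead (word x).
Proof.
move=> hx; have pell_tail := pellb_behead (pellb_word x) hx.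
by rewrite /word /ptail val_insubd /= -behead_map ifT // behead_map.
Qed.

Lemma word_ptail2 n (x : V n.+2) :
  head_letter x = k -> word (ptail2 x) = behead (behead (word x)).
Proof.
move=> hx; have [_ pell_tail] := pellb_behead2 (pellb_word x) hx.
by rewrite /word /ptail2 val_insubd /= -!behead_map ifT // !behead_map.
Qed.

Lemma head_letter_pcons n j (x : V n) : j < k -> head_letter (pcons j x) = j.
Proof. by move=> j_lt_k; rewrite /head_letter word_pcons. Qed.

Lemma head_letter_pconsKK n (x : V n) : head_letter (pconsKK x) = k.
Proof. by rewrite /head_letter word_pconsKK. Qed.

Lemma pcons_inj n j : j < k -> injective (@pcons n j).
Proof.
by move=> j_lt_k x y /(congr1 (@word k n.+1)); rewrite !word_pcons // => -[/word_inj].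
Qed.

Lemma pconsKK_inj n : injective (@pconsKK n).
Proof. by move=> x y /(congr1 (@word k n.+2)); rewrite !word_pconsKK => -[/word_inj]. Qed.

Lemma pcons_ptail n (x : V n.+1) : head_letter x < k -> pcons (head_letter x) (ptail x) = x.
Proof.
move=> hx; apply: word_inj; rewrite word_pcons // word_ptail ?ltn_eqF //.
by move: (size_word x) hx; rewrite /head_letter; case: (word x).
Qed.

Lemma pconsKK_ptail2 n (x : V n.+2) : head_letter x = k -> pconsKK (ptail2 x) = x.
Proof.
move=> hx; apply: word_inj; rewrite word_pconsKK word_ptail2 //.
have [hx1 _] := pellb_behead2 (pellb_word x) hx; move: (size_word x) hx hx1.
by rewrite /head_letter; case: (word x) => [|a [|b s]] //= _ -> ->.
Qed.

Lemma head_letter_lt_k (x : V 1) : head_letter x < k.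
Proof.
rewrite ltn_neqAle head_letter_le andbT; apply/eqP => /(pellb_behead2 (pellb_word x)) [].
by rewrite nth_default ?size_word // => k0 _; move: k_gt0; rewrite -k0.
Qed.

Lemma card_pell0 : #|{: V 0}| = 1.
Proof.
rewrite -cardsT; apply/eqP/cards1P; exists (pell_zero 0); apply/setP => y; rewrite !inE.
apply/esym/eqP/word_inj.
by move: (size_word y) (size_word (pell_zero 0)); do 2!case: (word _).
Qed.

Lemma pell_adj_pcons n j (x y : V n) :
  j < k -> pell_adj (pcons j x) (pcons j y) = pell_adj x y.
Proof.
move=> j_lt_k; apply/(pell_adjP k_gt1)/(pell_adjP k_gt1);
  by rewrite !word_pcons // (word_adj_cons k_gt0).
Qed.

Lemma pell_adj_pconsKK n (x y : V n) : pell_adj (pconsKK x) (pconsKK y) = pell_adj x y.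
Proof.
by apply/(pell_adjP k_gt1)/(pell_adjP k_gt1);
  rewrite !word_pconsKK !(word_adj_cons k_gt0).
Qed.

Lemma pell_adj_pcons_succ n j (x : V n) : j.+1 < k -> pell_adj (pcons j x) (pcons j.+1 x).
Proof.
move=> j1_lt_k; apply/(pell_adjP k_gt1); rewrite !word_pcons //; last lia.
by left; left; exists 0; split=> [[|q]||/=] //; lia.
Qed.

Lemma pell_adj_pcons_eq n j j' (x y : V n) : j < k -> j' < k -> j != j' ->
  pell_adj (pcons j x) (pcons j' y) -> x = y.
Proof.
move=> j_lt_k j'_lt_k jj' /(pell_adjP k_gt1); rewrite !word_pcons //.
case/(word_adj_head k_gt0)/(_ jj') => [[eq_tail _ _ _]|[_ /= [[]|[]]]]; try lia.
apply/word_inj/(@eq_from_nth _ 0); first by rewrite !size_word.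
by move=> q _; apply: (eq_tail q.+1).
Qed.

Lemma pell_adj_pcons2_pconsKK n (y : V n) :
  pell_adj (pcons (k - 1) (pcons (k - 1) y)) (pconsKK y).
Proof.
apply/(pell_adjP k_gt1); rewrite !word_pcons ?word_pconsKK; try lia.
by left; right; exists 0; split=> // -[|[|q]].
Qed.

Lemma pell_adj_pconsKK_eq n (w : V n.+2) (y : V n) : head_letter w = k - 1 ->
  pell_adj w (pconsKK y) -> w = pcons (k - 1) (pcons (k - 1) y).
Proof.
rewrite /head_letter => hw /(pell_adjP k_gt1); rewrite word_pconsKK.
have hw_k : nth 0 (word w) 0 != nth 0 [:: k, k & word y] 0 by rewrite /= hw; lia.
case/(word_adj_head k_gt0)/(_ hw_k) => [[_ _ _ /= ?]|[eq_tail [[w0 w1 _ _]|[/= w0 _ _ _]]]];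
  try lia.
apply: word_inj; rewrite !word_pcons; try lia.
apply: (@eq_from_nth _ 0); first by rewrite /= !size_word.
by case=> [|[|q]] _ //=; rewrite ?w0 ?w1 // eq_tail.
Qed.

End PellConstructions.

(** * Counting the cubes of Pi_(n,k) *)

Section PellCounting.
Variable k : nat.
Hypothesis k_gt1 : 1 < k.
Local Notation V n := (pell_vertex n k).
Local Notation c n i := (cube_count (@pell_adj n k) i).
Local Notation c' n i := (if i is i'.+1 then c n i' else 0).
Local Notation on_count n a i := (on_level_count (@pell_adj n k) (@head_letter k n) i a).
Local Notation across_count n a i :=
  (across_levels_count (@pell_adj n k) (@head_letter k n) i a).
Local Notation pcons := (pcons k_gt1).
Local Notation pconsKK := (pconsKK k_gt1).
Local Notation ptail := (ptail k_gt1).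
Local Notation ptail2 := (ptail2 k_gt1).

Let head_letter_step n := @pell_adj_head_step k k_gt1 n.
Let head_letter_uniq n := @pell_adj_head_uniq k k_gt1 n.

Lemma pell_count_on_level n i j : j < k -> on_count n.+1 j i = c n i.
Proof.
move=> j_lt_k; apply: (count_on_level (g := pcons (n := n) j) (r := ptail (n := n))).
- exact: pcons_inj.
- by move=> x y; apply: pell_adj_pcons.
- by move=> x; apply: head_letter_pcons.
- by move=> w hw; rewrite -{1}hw pcons_ptail // hw.
Qed.

Lemma pell_count_on_levelK n i : on_count n.+2 k i = c n i.
Proof.
apply: (count_on_level (g := pconsKK (n := n)) (r := ptail2 (n := n))).
- exact: pconsKK_inj.
- by move=> x y; apply: pell_adj_pconsKK.
- by move=> x; apply: head_letter_pconsKK.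
- by move=> w; apply: pconsKK_ptail2.
Qed.

Lemma pell_count_across n i j : j.+1 < k ->
  across_count n.+1 j i = c' n i.
Proof.
move=> j1_lt_k; have j_lt_k : j < k by lia.
apply: (count_across_levels (@head_letter_step _) (@head_letter_uniq _)
          (g0 := pcons (n := n) j) (g1 := pcons (n := n) j.+1) (r1 := ptail (n := n))).
- exact: pell_adj_sym.
- exact: pcons_inj.
- exact: pcons_inj.
- by move=> x y; apply: pell_adj_pcons.
- by move=> x y; apply: pell_adj_pcons.
- by move=> x; apply: head_letter_pcons.
- by move=> x; apply: head_letter_pcons.
- by move=> x; apply: pell_adj_pcons_succ.
- move=> w y hw; rewrite -(pcons_ptail k_gt1 (x := w)) ?hw // => /pell_adj_pcons_eq -> //.
  by rewrite ltn_eqF.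
- by move=> w hw; rewrite -{1}hw pcons_ptail // hw.
Qed.

Lemma pell_count_acrossK n i :
  across_count n.+2 (k - 1) i = c' n i.
Proof.
have km1_lt_k : k - 1 < k by lia.
apply: (count_across_levels (@head_letter_step _) (@head_letter_uniq _)
          (g0 := fun y => pcons (k - 1) (pcons (n := n) (k - 1) y))
          (g1 := pconsKK (n := n)) (r1 := ptail2 (n := n))).
- exact: pell_adj_sym.
- by move=> x y /(pcons_inj km1_lt_k) /(pcons_inj km1_lt_k).
- exact: pconsKK_inj.
- by move=> x y; rewrite !pell_adj_pcons.
- by move=> x y; apply: pell_adj_pconsKK.
- by move=> x; apply: head_letter_pcons.
- by move=> x; rewrite head_letter_pconsKK; lia.
- by move=> x; apply: pell_adj_pcons2_pconsKK.
- by move=> w y; apply: pell_adj_pconsKK_eq.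
- by move=> w hw; apply: pconsKK_ptail2; lia.
Qed.

Lemma pell_count_on_levelK1 i : on_count 1 k i = 0.
Proof. by apply: count_on_level_empty => x; rewrite ltn_eqF ?head_letter_lt_k. Qed.

Lemma pell_count_acrossK1 i : across_count 1 (k - 1) i = 0.
Proof.
apply: count_across_levels_empty => x; rewrite ltn_eqF //.
by rewrite (leq_trans (head_letter_lt_k k_gt1 x)); lia.
Qed.

Lemma pell_cube_count_succ n i :
  c n.+1 i = k * c n i + (k - 1) * c' n i +
             on_count n.+1 k i + across_count n.+1 (k - 1) i.
Proof.
have on_sum : \sum_(a < k) on_count n.+1 a i = k * c n i.
  rewrite (eq_bigr (fun _ => c n i)) => [|a _]; last exact: pell_count_on_level.
  by rewrite sum_nat_const card_ord.
have across_sum : \sum_(a < k - 1) across_count n.+1 a i =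
                  (k - 1) * c' n i.
  rewrite (eq_bigr (fun _ => c' n i)) => [|a _].
    by rewrite sum_nat_const card_ord.
  by rewrite pell_count_across //; have := ltn_ord a; lia.
rewrite (cube_count_levels (@head_letter_step _) (@head_letter_uniq _) i
           (@head_letter_le k n.+1)).
rewrite big_ord_recr /= (sum_ord_recr_pred (fun a => across_count n.+1 a i)); last lia.
by rewrite -subn1 on_sum across_sum addnACA addnA.
Qed.

Lemma pell_cube_count0 i : c 0 i = (i == 0).
Proof.
case: i => [|i]; first by rewrite cube_count0 ?(card_pell0 k_gt1) //; apply: pell_adj_irr.
by rewrite cube_count_eq0 // (card_pell0 k_gt1) -{1}(expn0 2) ltn_exp2l.
Qed.

Lemma pell_cube_count1 i : c 1 i = k * c 0 i + (k - 1) * c' 0 i.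
Proof.
by rewrite pell_cube_count_succ pell_count_on_levelK1 pell_count_acrossK1 !addn0.
Qed.

Lemma pell_cube_count_rec n i :
  c n.+2 i = k * c n.+1 i + (k - 1) * c' n.+1 i +
             c n i + c' n i.
Proof. by rewrite pell_cube_count_succ pell_count_on_levelK pell_count_acrossK. Qed.

End PellCounting.

Import Order.TTheory GRing.Theory Num.Theory.
Local Open Scope ring_scope.

Lemma natr_pell_rec (k a b c d : nat) : (1 <= k)%N ->
  ((k * a + (k - 1) * b + c + d)%N%:R : int) =
  a%:R *+ k + (k%:R - 1) * b%:R + (c%:R + d%:R).
Proof. by move=> k_gt0; rewrite !natrD !natrM natrB // -mulr_natr; ring. Qed.

Theorem proposition5p1 (k : nat) (hk : (2 <= k)%N) :
  [/\ pell_cube_poly 0 k = 1,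
      pell_cube_poly 1 k = k%:R + (k%:R - 1) *: 'X &
      forall n : nat, (2 <= n)%N ->
        pell_cube_poly n k =
          (k%:R + (k%:R - 1) *: 'X) * pell_cube_poly n.-1 k
          + (1 + 'X) * pell_cube_poly n.-2 k].
Proof.
have coefE n i : (pell_cube_poly n k)`_i = (cube_count (@pell_adj n k) i)%:R.
  exact: coef_cube_poly.
split.
- by apply/polyP => i; rewrite coefE coef1 pell_cube_count0.
- apply/polyP => i; rewrite coefE pell_cube_count1 // coefD coefZ coefX coefMn coef1.
  by case: i => [|[|i]] /=; rewrite ?pell_cube_count0 //= !natrD !natrM;
    rewrite (natrB _ (ltnW hk)); ring.
case=> [|[|n]] // _ /=; apply/polyP => i.
rewrite coefE pell_cube_count_rec // mulrDl mulrDl mul1r -scalerAl mulr_natl.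
rewrite !coefD coefMn coefZ !coefXM !coefE.
by case: i => [|i] /=; apply: natr_pell_rec; lia.
Qed.
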